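(* Let $S$ be an additive numerical semigroup with multiplicity $e$ whose blowup $B$ is symmetric. Then ${\rm d}_{\max}(S)=d(F(B)+e;B^{\mathcal D})$.
   Context: $S$ is a numerical semigroup (a submonoid of $\mathbb N$ with finite complement) with minimal generators $e<a_1<\dots<a_t$. An $S$-factorization of $n$ is $(c_0,\dots,c_t)\in\mathbb N^{t+1}$ with $c_0e+\sum c_ia_i=n$, of length $\sum c_i$. ${\rm ord}(n;S)$ is the maximal such length, ${\rm d}_{\max}(n;S)$ is the number of factorizations of maximal length, and ${\rm d}_{\max}(S)=\max_{n\in S}{\rm d}_{\max}(n;S)$. $S$ is additive if ${\rm ord}(u+e;S)={\rm ord}(u;S)+1$ for all $u\in S$. The blowup is $B=\langle e,d_1,\dots,d_t\rangle$ with $d_i=a_i-e$, and $\mathcal D=(e,d_1,\dots,d_t)$. $d(b;B^{\mathcal D})$ is the number of tuples $(x_0,\dots,x_t)\in\mathbb N^{t+1}$ with $x_0e+\sum x_id_i=b$. The Frobenius number $F(T)$ is the largest integer not in $T$ (so $F(\mathbb N)=-1$). $T$ is symmetric if, whenever $x+y=F(T)$ with $x,y\in\mathbb Z$, exactly one of $x,y$ lies in $T$. *)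

From mathcomp Require Import all_boot all_order all_algebra.
Set Implicit Arguments. Unset Strict Implicit. Unset Printing Implicit Defensive.
Import Order.TTheory GRing.Theory Num.Theory.

Definition inSg (g : seq nat) (n : nat) : Prop :=
  exists c : 'I_(size g) -> nat, \sum_(i < size g) c i * nth 0 g i = n.

Definition inZ (T : nat -> Prop) (x : int) : Prop :=
  match x with Posz n => T n | Negz _ => False end.

Definition min_gens (g : seq nat) : Prop :=
  [/\ g != [::], sorted ltn g, 0 < head 0 g,
      (exists N, forall n, N <= n -> inSg g n) &
      forall i : 'I_(size g), ~ exists c : 'I_(size g) -> nat,
          c i = 0 /\ \sum_(j < size g) c j * nth 0 g j = nth 0 g i].

Definition mult (g : seq nat) : nat := head 0 g.

(* Factorizations of n w.r.t. the tuple g (all entries of g are assumed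
   positive, so every coefficient is at most n). *)
Definition facts (g : seq nat) (n : nat) : {set {ffun 'I_(size g) -> 'I_n.+1}} :=
  [set c : {ffun 'I_(size g) -> 'I_n.+1} | \sum_(i < size g) (c i : nat) * nth 0 g i == n].

Definition flen (k n : nat) (c : {ffun 'I_k -> 'I_n.+1}) : nat :=
  \sum_(i < k) (c i : nat).

Definition ordS (g : seq nat) (n : nat) : nat :=
  \max_(c in facts g n) flen c.

Definition dmax_n (g : seq nat) (n : nat) : nat :=
  #|[set c in facts g n | flen c == ordS g n]|.

Definition additiveNS (g : seq nat) : Prop :=
  forall u, inSg g u -> ordS g (u + mult g) = (ordS g u).+1.

Definition blowD (g : seq nat) : seq nat :=
  mult g :: [seq a - mult g | a <- behead g].

Definition dD (g : seq nat) (b : nat) : nat := #|facts (blowD g) b|.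

Definition frobenius (T : nat -> Prop) (f : int) : Prop :=
  ~ inZ T f /\ forall m : int, (f < m)%R -> inZ T m.

Definition symmetricNS (T : nat -> Prop) : Prop :=
  exists f, frobenius T f /\
    forall x y : int, (x + y)%R = f -> (inZ T x <-> ~ inZ T y).

From Pilot Require Import Defs.
From mathcomp Require Import all_boot all_order all_algebra.
Import Order.TTheory GRing.Theory Num.Theory.
From mathcomp Require Import zify.

Set Implicit Arguments.
Unset Strict Implicit.
Unset Printing Implicit Defensive.

(* A factorization u of n in S = <e, a_1, ..., a_t> of length L satisfies
   n = L e + sum_(i >= 1) u_i d_i with d_i = a_i - e.  Hence the factorizations
   of n of maximal length l = ord(n) are the vectors whose tail is a
   factorization in B of beta = n - l e.  Additivity of S forbids beta - e in B
   (it would give n + K e a factorization longer than ord(n) + K), so by the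
   symmetry of B the element F(B) - (beta - e) = b - beta, b = F(B) + e, lies
   in B; adding a fixed factorization of b - beta injects the maximal
   factorizations of n into those of b.  Conversely b - e = F(B) is not in B,
   so no factorization of b uses e, and for n = b e + b (which has ord(n) = b)
   the factorizations of b lift back injectively. *)

Definition wt (s : seq nat) (u : nat -> nat) : nat :=
  \sum_(i < size s) u i * nth 0 s i.

Lemma wtD s u v : wt s (fun j => u j + v j) = wt s u + wt s v.
Proof. by rewrite /wt -big_split; apply: eq_bigr => i _; rewrite mulnDl. Qed.

(* Coefficient vectors of factorizations are read as functions [nat -> nat],
   extended by [0] outside the index range. *)
Definition coef k n (c : {ffun 'I_k -> 'I_n.+1}) (j : nat) : nat :=
  oapp (fun i => val (c i)) 0 (insub j).

Lemma coefE k n (c : {ffun 'I_k -> 'I_n.+1}) (i : 'I_k) : coef c i = c i.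
Proof. by rewrite /coef valK. Qed.

Lemma inSg_wt s n : inSg s n <-> exists u, wt s u = n.
Proof.
split=> [[c <-]|[u <-]]; last by exists (fun i => u i).
exists (fun j => oapp c 0 (insub j)).
by apply: eq_bigr => i _; rewrite valK.
Qed.

Lemma mem_facts s n (c : {ffun 'I_(size s) -> 'I_n.+1}) :
  (c \in facts s n) = (wt s (coef c) == n).
Proof. by rewrite inE /wt; congr (_ == _); apply: eq_bigr => i _; rewrite coefE. Qed.

Lemma flen_coef k n (c : {ffun 'I_k -> 'I_n.+1}) :
  flen c = \sum_(i < k) coef c i.
Proof. by apply: eq_bigr => i _; rewrite coefE. Qed.

Lemma eq_wt s (u v : nat -> nat) : (forall i : 'I_(size s), u i = v i) -> wt s u = wt s v.
Proof. by move=> eq_uv; apply: eq_bigr => i _; rewrite eq_uv. Qed.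

Lemma coef_le_wt s u m :
  {in s, forall x, 0 < x} -> wt s u = m -> forall i : 'I_(size s), u i <= m.
Proof.
move=> s_gt0 <- i; rewrite /wt (bigD1 i) //=; apply: leq_trans (leq_addr _ _).
by rewrite leq_pmulr // s_gt0 // mem_nth.
Qed.

Lemma coef_ffun k m (u : nat -> nat) (i : 'I_k) :
  u i <= m -> coef [ffun j : 'I_k => inord (u j) : 'I_m.+1] i = u i.
Proof. by move=> le_um; rewrite coefE ffunE inordK. Qed.

Lemma facts_wt s u n : {in s, forall x, 0 < x} -> wt s u = n ->
  exists2 c : {ffun 'I_(size s) -> 'I_n.+1},
    c \in facts s n & forall i : 'I_(size s), coef c i = u i.
Proof.
move=> s_gt0 wt_u; exists [ffun i : 'I_(size s) => inord (u i)] => [|i].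
  rewrite mem_facts -(rwP eqP) -[RHS]wt_u; apply: eq_bigr => i _.
  by rewrite coef_ffun // (coef_le_wt s_gt0 wt_u).
by rewrite coef_ffun // (coef_le_wt s_gt0 wt_u).
Qed.

(* Injections between sets of factorizations are described on coefficient
   vectors, which avoids casting between different bounds [n] and [m]. *)
Lemma leq_card_coef k n k' m (A : {set {ffun 'I_k -> 'I_n.+1}})
    (B : {set {ffun 'I_k' -> 'I_m.+1}}) (G : (nat -> nat) -> nat -> nat) :
  {in A, forall c (i : 'I_k'), G (coef c) i <= m} ->
  {in A, forall c d, (forall i : 'I_k', coef d i = G (coef c) i) -> d \in B} ->
  {in A &, forall c c', (forall j, j < k' -> G (coef c) j = G (coef c') j) ->
                        forall j, j < k -> coef c j = coef c' j} ->
  #|A| <= #|B|.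
Proof.
move=> G_le G_mem G_inj.
pose F (c : {ffun 'I_k -> 'I_n.+1}) := [ffun i : 'I_k' => inord (G (coef c) i) : 'I_m.+1].
have coefF c (i : 'I_k') : c \in A -> coef (F c) i = G (coef c) i.
  by move=> Ac; rewrite coef_ffun ?G_le.
rewrite -(card_in_imset (f := F)); last first.
  move=> c c' Ac Ac' eqF; apply/ffunP => i; apply: val_inj; rewrite /= -!coefE.
  by apply: G_inj => // j lt_jk; rewrite -!(coefF _ (Ordinal lt_jk)) // eqF.
apply/subset_leq_card/subsetP => _ /imsetP[c Ac ->].
by apply: (G_mem _ Ac) => i; rewrite coefF.
Qed.

Section Frobenius.

Variable T : nat -> Prop.

Lemma inZ_ge0 x : inZ T x -> (0 <= x)%R.
Proof. by case: x. Qed.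

Lemma frobenius_uniq f f' : frobenius T f -> frobenius T f' -> f = f'.
Proof.
move=> [Tf' Tgt] [Tf Tgt']; case: (ltgtP f f') => // [/Tgt | /Tgt'] //.
Qed.

Lemma frobenius_add f e b : frobenius T f -> Posz b = (f + Posz e)%R -> 0 < e ->
  T b /\ (forall m, T m -> m + e != b).
Proof.
move=> [Tf Tgt] b_eq e_gt0; split; first by apply: (Tgt (Posz b)); lia.
by move=> m Tm; apply/eqP => m_eq; apply: Tf; have -> : f = Posz m by lia.
Qed.

Lemma symmetric_complement f (e b beta : nat) :
  symmetricNS T -> frobenius T f -> Posz b = (f + Posz e)%R ->
  (forall m, T m -> m + e != beta) -> exists2 r, T r & b = beta + r.
Proof.
move=> [f' [frob_f' sym]] frob_f b_eq gap_beta.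
rewrite (frobenius_uniq frob_f' frob_f) in sym.
have notin : ~ inZ T (Posz beta - Posz e)%R.
  case: (leqP e beta) => [le_e|lt_beta]; last by move=> /inZ_ge0; lia.
  by rewrite subzn //= => /gap_beta; rewrite subnK ?eqxx.
have := (sym (f - (Posz beta - Posz e))%R _ (subrK _ _)).2 notin.
have -> : (f - (Posz beta - Posz e) = Posz b - Posz beta)%R by lia.
case: (leqP beta b) => [le_beta|lt_b]; last by move=> /inZ_ge0; lia.
by rewrite subzn //= => Tr; exists (b - beta); rewrite ?subnKC.
Qed.

End Frobenius.

Section Blowup.

Variables (e : nat) (A : seq nat).
Hypotheses (e_gt0 : 0 < e) (gt_e : {in A, forall a, e < a}).

Local Notation k := (size A).
Local Notation g := (e :: A).
Local Notation D := (blowD (e :: A)).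

Definition len (u : nat -> nat) : nat := \sum_(i < k.+1) u i.
Definition tail_len (u : nat -> nat) : nat := \sum_(i < k) u i.+1.
Definition tail_wt (u : nat -> nat) : nat := \sum_(i < k) u i.+1 * (nth 0 A i - e).

Definition sethead (x : nat) (u : nat -> nat) (j : nat) : nat :=
  if j is 0 then x else u j.

(* [m + e != b] for all [m] in B says that [b - e] is not in B. *)
Definition blowD_gap (b : nat) : Prop := forall m, inSg D m -> m + e != b.

Lemma len_tail u : len u = u 0 + tail_len u.
Proof. by rewrite /len big_ord_recl. Qed.

Lemma len_sethead x u : len (sethead x u) = x + tail_len u.
Proof. by rewrite len_tail. Qed.

Lemma tail_wt_sethead x u : tail_wt (sethead x u) = tail_wt u.
Proof. by []. Qed.

Lemma eq_len (u v : nat -> nat) :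
  (forall i : 'I_k.+1, u i = v i) -> len u = len v.
Proof. by move=> eq_uv; apply: eq_bigr => i _. Qed.

Lemma eq_tail_len (u v : nat -> nat) :
  (forall j, j < k -> u j.+1 = v j.+1) -> tail_len u = tail_len v.
Proof. by move=> eq_uv; apply: eq_bigr => i _; rewrite eq_uv. Qed.

Lemma eq_head_tail (u v : nat -> nat) : u 0 = v 0 ->
  (forall j, j < k -> u j.+1 = v j.+1) -> forall j, j < k.+1 -> u j = v j.
Proof. by move=> eq0 eq_uv [|j] //; apply: eq_uv. Qed.

Lemma tail_len_le_wt u : tail_len u <= tail_wt u.
Proof. by apply: leq_sum => i _; rewrite leq_pmulr // subn_gt0 gt_e // mem_nth. Qed.

Lemma size_blowD : size D = k.+1.
Proof. by rewrite /= size_map. Qed.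

Lemma gt0_g : {in g, forall x, 0 < x}.
Proof. by move=> x /predU1P[-> // | /gt_e]; apply: leq_ltn_trans. Qed.

Lemma gt0_D : {in D, forall x, 0 < x}.
Proof. by move=> x /predU1P[-> // | /mapP[a /gt_e lt_ea ->]]; rewrite subn_gt0. Qed.

Lemma flen_len n (c : {ffun 'I_(size g) -> 'I_n.+1}) : flen c = len (coef c).
Proof. exact: flen_coef. Qed.

Lemma wt_g u : wt g u = len u * e + tail_wt u.
Proof.
rewrite /wt /= big_ord_recl len_tail /tail_len /tail_wt mulnDl -addnA big_distrl.
rewrite -big_split /=; congr (_ + _); apply: eq_bigr => i _.
by rewrite -mulnDr subnKC // ltnW // gt_e // mem_nth.
Qed.

Lemma wt_D u : wt D u = u 0 * e + tail_wt u.
Proof.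
rewrite /wt /= big_ord_recl /tail_wt; congr (_ + _).
rewrite -(big_mkord xpredT (fun i => u i.+1 * nth 0 [seq a - e | a <- A] i)).
by rewrite size_map big_mkord; apply: eq_bigr => i _; rewrite (nth_map 0).
Qed.

Lemma wt_lift x l :
  tail_len x <= l -> wt g (sethead (l - tail_len x) x) = l * e + tail_wt x.
Proof. by move=> le_xl; rewrite wt_g len_sethead subnK. Qed.

(* [ordS] alone would be the successor on ordinals from fintype. *)
Lemma ordS_ge u n : wt g u = n -> len u <= Defs.ordS g n.
Proof.
move=> /(facts_wt gt0_g)[c fact_c coef_c].
apply: leq_trans (leq_bigmax_cond _ fact_c); rewrite flen_len.
by apply/eq_leq/eq_len.
Qed.

Lemma ordS_attained n :
  inSg g n -> exists2 u, wt g u = n & len u = Defs.ordS g n.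
Proof.
move=> /inSg_wt[u /(facts_wt gt0_g)[c0 fact_c0 _]].
have [c fact_c ->] : {c | c \in facts g n & Defs.ordS g n = flen c}.
  by apply: eq_bigmax_cond; apply/card_gt0P; exists c0.
by exists (coef c); [apply/eqP; rewrite -mem_facts | rewrite flen_len].
Qed.

Lemma inSg_add_mul_e n K : inSg g n -> inSg g (n + K * e).
Proof.
move=> /inSg_wt[u <-]; apply/inSg_wt; exists (sethead (u 0 + K) u).
by rewrite !wt_g len_sethead len_tail addnAC mulnDl addnAC.
Qed.

Lemma ordS_add_mul_e n K :
  additiveNS g -> inSg g n -> Defs.ordS g (n + K * e) = Defs.ordS g n + K.
Proof.
move=> add_g Sn; elim: K => [|K IH]; first by rewrite !addn0.
rewrite mulSnr addnA; have := add_g _ (inSg_add_mul_e K Sn); rewrite /mult /= => ->.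
by rewrite IH addnS.
Qed.

Lemma inSg_blowD_sub u n j :
  wt g u = n -> j <= len u -> exists2 m, inSg D m & n = m + j * e.
Proof.
move=> wt_u le_ju; exists (wt D (sethead (len u - j) u)).
  by apply/inSg_wt; eexists.
by rewrite wt_D -wt_u wt_g /= addnAC -mulnDl subnK.
Qed.

Lemma blowD_gap_ordS n beta : additiveNS g -> inSg g n ->
  n = Defs.ordS g n * e + beta -> blowD_gap beta.
Proof.
move=> add_g Sn n_eq m /inSg_wt[y <-]; apply/eqP => beta_eq.
set l := Defs.ordS g n in n_eq.
have wt_y : wt g (sethead (y 0 + l.+1) y) = n + tail_len y * e.
  by rewrite wt_g len_sethead tail_wt_sethead n_eq -beta_eq wt_D; nia.
have := ordS_ge wt_y; rewrite ordS_add_mul_e // len_sethead -/l; lia.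
Qed.

Lemma head_eq0 x b : wt D x = b -> blowD_gap b -> x 0 = 0.
Proof.
case x0: (x 0) => [//|j] wt_x gap_b.
have /negP[] : wt D (sethead j x) + e != b by apply/gap_b/inSg_wt; eexists.
rewrite -wt_x !wt_D x0 tail_wt_sethead /= mulSn; apply/eqP; lia.
Qed.

Lemma ordS_blowD_gap b : inSg D b -> blowD_gap b ->
  inSg g (b * e + b) /\ Defs.ordS g (b * e + b) = b.
Proof.
move=> /inSg_wt[x wt_x] gap_b.
have tw_x : tail_wt x = b by rewrite -wt_x wt_D (head_eq0 wt_x gap_b).
have le_xb : tail_len x <= b by rewrite -tw_x tail_len_le_wt.
have wt_u := wt_lift le_xb; rewrite tw_x in wt_u.
have Sn : inSg g (b * e + b) by apply/inSg_wt; eexists; exact: wt_u.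
split=> //; apply/eqP; rewrite eqn_leq; apply/andP; split; last first.
  by have := ordS_ge wt_u; rewrite len_sethead subnK.
have [v wt_v len_v] := ordS_attained Sn; rewrite leqNgt; apply/negP => lt_bv.
have [m Bm eq_m] : exists2 m, inSg D m & b * e + b = m + b.+1 * e.
  by apply: inSg_blowD_sub wt_v _; rewrite len_v.
by have /eqP := gap_b m Bm; apply; move: eq_m; rewrite mulSn; lia.
Qed.

Lemma dmax_le_dD n beta r : n = Defs.ordS g n * e + beta -> inSg D r ->
  dmax_n g n <= dD g (beta + r).
Proof.
move=> n_eq /inSg_wt[rho wt_rho]; set l := Defs.ordS g n in n_eq.
have max_fact c : c \in [set c in facts g n | flen c == l] ->
    len (coef c) = l /\ tail_wt (coef c) = beta.
  rewrite inE mem_facts flen_len wt_g => /andP[/eqP wt_c /eqP len_c].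
  by split=> //; apply/(@addnI (l * e)); rewrite -n_eq -len_c.
pose G u j := sethead 0 u j + rho j.
have wt_G c : c \in [set c in facts g n | flen c == l] ->
    wt D (G (coef c)) = beta + r.
  by move=> /max_fact[_ tw_c]; rewrite wtD wt_D tail_wt_sethead tw_c wt_rho.
apply: (leq_card_coef (G := G)).
- by move=> c fact_c; apply: coef_le_wt gt0_D (wt_G c fact_c).
- by move=> c fact_c d coef_d; rewrite mem_facts (eq_wt coef_d) wt_G.
move=> c c' /max_fact[len_c _] /max_fact[len_c' _]; rewrite size_blowD => eq_G.
have eq_tail j : j < k -> coef c j.+1 = coef c' j.+1.
  by move=> lt_jk; apply/(addIn (eq_G j.+1 lt_jk)).
apply: (eq_head_tail _ eq_tail); apply/(@addIn (tail_len (coef c))).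
by rewrite -len_tail len_c (eq_tail_len eq_tail) -len_tail len_c'.
Qed.

Lemma dD_le_dmax n beta : n = Defs.ordS g n * e + beta -> beta <= Defs.ordS g n ->
  blowD_gap beta -> dD g beta <= dmax_n g n.
Proof.
move=> n_eq le_beta gap_beta; set l := Defs.ordS g n in n_eq le_beta.
have fact_D c : c \in facts D beta ->
    coef c 0 = 0 /\ tail_wt (coef c) = beta /\ tail_len (coef c) <= l.
  rewrite mem_facts => /eqP wt_c; have c0 := head_eq0 wt_c gap_beta.
  have tw_c : tail_wt (coef c) = beta by rewrite -[RHS]wt_c wt_D c0.
  by rewrite -tw_c in le_beta; have := leq_trans (tail_len_le_wt _) le_beta.
pose G u := sethead (l - tail_len u) u.
have wt_G c : c \in facts D beta -> wt g (G (coef c)) = n.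
  by move=> /fact_D[_ [tw_c le_cl]]; rewrite wt_lift // tw_c.
apply: (leq_card_coef (G := G)).
- by move=> c fact_c; apply: coef_le_wt gt0_g (wt_G c fact_c).
- move=> c fact_c d coef_d; rewrite inE mem_facts (eq_wt coef_d) wt_G //=.
  have [_ [_ le_cl]] := fact_D c fact_c.
  by rewrite flen_len (eq_len coef_d) len_sethead subnK // !eqxx.
move=> c c' /fact_D[c0 _] /fact_D[c'0 _] eq_G j lt_jD.
have lt_jk : j < k.+1 by rewrite -size_blowD.
apply: (eq_head_tail _ _ lt_jk) => [|i lt_ik]; first by rewrite c0 c'0.
exact: (eq_G i.+1 lt_ik).
Qed.

Lemma dmax_le_dD_frobenius f b n :
  additiveNS g -> symmetricNS (inSg D) -> frobenius (inSg D) f ->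
  Posz b = (f + Posz e)%R -> inSg g n -> dmax_n g n <= dD g b.
Proof.
move=> add_g sym_B frob_B b_eq Sn; have [u wt_u len_u] := ordS_attained Sn.
have n_eq : n = Defs.ordS g n * e + tail_wt u by rewrite -len_u -wt_g.
have [r Br ->] := symmetric_complement sym_B frob_B b_eq
  (blowD_gap_ordS add_g Sn n_eq).
exact: dmax_le_dD n_eq Br.
Qed.

End Blowup.

Lemma min_gens_cons e A : min_gens (e :: A) -> 0 < e /\ {in A, forall a, e < a}.
Proof. by case=> _ /(order_path_min ltn_trans)/allP gt_e e_gt0 _ _. Qed.

Theorem corollary4p9 (g : seq nat) (f : int) (b : nat) :
  min_gens g -> additiveNS g ->
  symmetricNS (inSg (blowD g)) ->
  frobenius (inSg (blowD g)) f ->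
  Posz b = (f + Posz (mult g))%R ->
  (exists n, inSg g n /\ dmax_n g n = dD g b) /\
  (forall n, inSg g n -> dmax_n g n <= dD g b).
Proof.
case: g => [[/eqP]//|e A] /min_gens_cons[e_gt0 gt_e] add_g sym_B frob_B b_eq.
rewrite /mult /= in b_eq.
have dmax_le := dmax_le_dD_frobenius e_gt0 gt_e add_g sym_B frob_B b_eq.
split=> //.
have [Bb gap_b] := frobenius_add frob_B b_eq e_gt0.
have [Sn ord_n] := ordS_blowD_gap e_gt0 gt_e Bb gap_b.
exists (b * e + b); split=> //; apply/eqP; rewrite eqn_leq dmax_le //=.
by apply: dD_le_dmax => //; rewrite ord_n.
Qed.
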